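(* Let $q$ be a prime power and $m>1$ an integer. Let $L_1(x)\in\mathbf{F}_{q^m}[x]$ be a linearized polynomial that is a permutation polynomial of $\mathbf{F}_{q^m}$, and let $L_2(x)\in\mathbf{F}_{q^m}[x]$ be a linearized polynomial. Let $b\in\mathbf{F}_q$, $\gamma\in\mathbf{F}_{q^m}$, let $h:\mathbf{F}_q\to\mathbf{F}_q$ be a map, and let $f:\mathbf{F}_{q^m}\to\mathbf{F}_q$ be a surjective map. Suppose $L_1^{-1}(L_2(\gamma))$ is a $b$-linear translator of $f$, where $L_1^{-1}$ denotes the inverse of the bijection $x\mapsto L_1(x)$ of $\mathbf{F}_{q^m}$. Then $L_1(x)+L_2(\gamma)h(f(x))$ is a permutation polynomial of $\mathbf{F}_{q^m}$ if and only if either $L_2(\gamma)=0$ or $x+b\,h(x)$ is a permutation polynomial of $\mathbf{F}_q$.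
   Context: A linearized polynomial over $\mathbf{F}_{q^m}$ is a polynomial of the form $\sum_{i=0}^{m-1}a_i x^{q^i}$ with $a_i\in\mathbf{F}_{q^m}$. Linear translator: let $f:\mathbf{F}_{q^m}\to\mathbf{F}_q$, $a\in\mathbf{F}_q$ and $\alpha$ a nonzero element of $\mathbf{F}_{q^m}$; $\alpha$ is an $a$-linear translator of $f$ if $f(x+u\alpha)-f(x)=ua$ for all $x\in\mathbf{F}_{q^m}$ and all $u\in\mathbf{F}_q$. A permutation polynomial (or map) of a finite field $K$ is one inducing a bijection $K\to K$. *)

(* F_q is modelled by F : finFieldType (q := #|F|, automatically
   a prime power), F_{q^m} by L : fieldExtType F with m := \dim {:L}. *)
From HB Require Import structures.
From mathcomp Require Import all_boot all_order all_algebra all_field.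
Set Implicit Arguments. Unset Strict Implicit. Unset Printing Implicit Defensive.
Import GRing.Theory.
Local Open Scope ring_scope.

Definition linearized (F : finFieldType) (L : fieldExtType F) (p : {poly L}) : Prop :=
  exists a : 'I_(\dim {: L}%VS) -> L,
    p = \sum_(i < \dim {: L}%VS) a i *: 'X^(#|F| ^ i)%N.

Definition is_perm (K : Type) (g : K -> K) : Prop := bijective g.

Definition linear_translator (F : finFieldType) (L : fieldExtType F)
    (f : L -> F) (alpha : L) (b : F) : Prop :=
  alpha != 0 /\ forall (x : L) (u : F), f (x + u%:A * alpha) - f x = u * b.

(* Write alpha := L1^-1(L2(gamma)), phi x := x + h(f x) alpha and
   psi y := y + b h(y).  Since L1 is additive and F-linear,
   L1(x) + L2(gamma) h(f x) = L1(phi x), so the map of the theorem permutes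
   F_{q^m} exactly when phi does.  The translator property gives
   f o phi = psi o f: as f is onto, a permutation phi forces psi onto, and
   conversely an injective psi makes phi injective, because phi x = phi y
   first forces f x = f y and then x = y.  Finiteness turns injective or
   onto maps into permutations.  The case L2(gamma) = 0 cannot occur, since
   a linear translator is nonzero. *)
From HB Require Import structures.
From mathcomp Require Import all_boot all_order all_algebra all_field all_fingroup all_solvable.
Set Implicit Arguments. Unset Strict Implicit. Unset Printing Implicit Defensive.
Import GRing.Theory.
Local Open Scope ring_scope.

Lemma surjF_bij (T : finType) (g : T -> T) :
  (forall y, exists x, g x = y) -> bijective g.
Proof.
move=> g_onto; have g_onto' y : exists x, g x == y.
  by have [x /eqP] := g_onto y; exists x.
pose s y := xchoose (g_onto' y).
have sK : cancel s g by move=> y; exact/eqP/(xchooseP (g_onto' y)).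
exact: (bij_can_bij (injF_bij (can_inj sK)) sK).
Qed.

Section Linearized.
Variables (F : finFieldType) (L : fieldExtType F).

Lemma pchar_nat_card : [pchar L].-nat #|F|.
Proof.
have [p _ pFp] := finPcharP F.
have := abelem_pgroup (fin_ring_pchar_abelem pFp).
rewrite /pgroup cardsT; apply: sub_in_pnat => r _.
by rewrite inE => /eqP ->; rewrite (pchar_lalg L).
Qed.

Lemma expf_card_exp (u : F) i : u ^+ (#|F| ^ i) = u.
Proof.
elim: i => [|i IHi]; first by rewrite expr1.
by rewrite expnS exprM expf_card IHi.
Qed.

Variable p : {poly L}.
Hypothesis p_lin : linearized p.

Lemma linearizedD x y : p.[x + y] = p.[x] + p.[y].
Proof.
case: p_lin => a ->; rewrite !horner_sum -big_split /=; apply: eq_bigr => i _.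
rewrite !hornerZ !hornerXn -mulrDr exprDn_pchar //.
by rewrite pnatX pchar_nat_card.
Qed.

Lemma linearizedZ (u : F) x : p.[u%:A * x] = u%:A * p.[x].
Proof.
case: p_lin => a ->; rewrite !horner_sum mulr_sumr; apply: eq_bigr => i _.
by rewrite !hornerZ !hornerXn !mulr_algl exprZn expf_card_exp scalerAr.
Qed.

Lemma linearized0 : p.[0] = 0.
Proof. by have := linearizedZ 0 0; rewrite scale0r !mul0r. Qed.

End Linearized.

Section LinearTranslator.
Variables (F : finFieldType) (L : fieldExtType F).
Variables (f : L -> F) (alpha : L) (b : F) (h : F -> F).
Hypothesis alpha_tr : linear_translator f alpha b.

Lemma translator_shift x : f (x + (h (f x))%:A * alpha) = f x + b * h (f x).
Proof.
have /eqP := alpha_tr.2 x (h (f x)).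
by rewrite subr_eq => /eqP ->; rewrite addrC mulrC.
Qed.

Lemma translator_shift_inj :
  injective (fun y => y + b * h y) ->
  injective (fun x => x + (h (f x))%:A * alpha).
Proof.
move=> psi_inj x y /= Exy.
have Ef : f x = f y by apply: psi_inj; rewrite -!translator_shift Exy.
by move: Exy; rewrite Ef => /addIr.
Qed.

Lemma translator_shift_surj :
  (forall y, exists x, f x = y) ->
  (forall z, exists x, x + (h (f x))%:A * alpha = z) ->
  forall y, exists x, x + b * h x = y.
Proof.
move=> f_onto phi_onto y; have [z <-] := f_onto y.
have [x <-] := phi_onto z.
by exists (f x); rewrite translator_shift.
Qed.

End LinearTranslator.

Theorem theorem4p1 (F : finFieldType) (L : fieldExtType F)
    (L1 L2 : {poly L}) (L1inv : L -> L) (b : F) (gamma : L)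
    (h : F -> F) (f : L -> F) :
  (1 < \dim {: L}%VS)%N ->
  linearized L1 -> is_perm (fun x => L1.[x]) ->
  cancel (fun x => L1.[x]) L1inv -> cancel L1inv (fun x => L1.[x]) ->
  linearized L2 ->
  (forall y : F, exists x : L, f x = y) ->
  linear_translator f (L1inv L2.[gamma]) b ->
  (is_perm (fun x : L => L1.[x] + L2.[gamma] * (h (f x))%:A)
   <-> L2.[gamma] = 0 \/ is_perm (fun x : F => x + b * h x)).
Proof.
move=> _ L1_lin _ L1K L1invK _ f_onto alpha_tr.
set c := L2.[gamma] in alpha_tr *; set alpha := L1inv c in alpha_tr.
have G_L1phi x :
    L1.[x] + c * (h (f x))%:A = L1.[x + (h (f x))%:A * alpha].
  by rewrite linearizedD // linearizedZ // L1invK mulrC.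
split=> [[G' GK G'K] | psi_perm].
- right; apply: surjF_bij; apply: (translator_shift_surj alpha_tr f_onto) => z.
  exists (G' L1.[z]).
  by apply: (can_inj L1K); rewrite -G_L1phi G'K.
- have psi_inj : injective (fun y => y + b * h y).
    case: psi_perm => [c0 | /bij_inj //].
    have L1inv0 : L1inv 0 = 0 by rewrite -{1}(linearized0 L1_lin) L1K.
    by case: alpha_tr => + _; rewrite /alpha c0 L1inv0 eqxx.
  apply: (@injF_bij (finvect_type L)) => x y /=; rewrite !G_L1phi.
  by move/(can_inj L1K)/(translator_shift_inj alpha_tr psi_inj).
Qed.
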